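(* Let $S_3$ be the simple undirected graph on vertex set $\{1,2,\dots,16\}$ whose edges are the path edges $\{j,j+1\}$ for $j=1,\dots,15$ together with the five edges $\{1,5\},\{1,13\},\{3,12\},\{4,8\},\{9,16\}$. Designate incoming vertices $i_1=1,\ i_2=6,\ i_3=8$ and outgoing vertices $o_1=16,\ o_2=11,\ o_3=14$. Let $G$ be any finite simple undirected graph that contains $S_3$ as an induced subgraph, has at least one vertex not in $S_3$, and is such that every edge of $G$ joining a vertex of $S_3$ to a vertex outside $S_3$ has its endpoint in $S_3$ belonging to $\{i_1,i_2,i_3,o_1,o_2,o_3\}$. Then for every Hamiltonian cycle $H$ of $G$, the edges of $H$ having both endpoints in $S_3$ form a single path that visits every vertex of $S_3$ (i.e. $H$ enters $S_3$ exactly once, traverses all of it, and leaves), and the two endpoints of this path are $i_k$ and $o_k$ for some $k\in\{1,2,3\}$.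
   Context: A Hamiltonian cycle of a graph is a cycle passing through every vertex exactly once. This is the ''in-out property'' for the subgraph $S_3$: each copy of it behaves like a single vertex in any Hamiltonian cycle, and a cycle entering at the $k$-th incoming vertex must leave at the $k$-th outgoing vertex. *)

From mathcomp Require Import all_boot.
Set Implicit Arguments. Unset Strict Implicit. Unset Printing Implicit Defensive.

(* Vertices of S_3 are 'I_16; vertex a : 'I_16 stands for the paper's vertex a+1. *)

Definition s3edge (u v : nat) : bool :=
  ((v == u.+1) && (1 <= u <= 15))
  || ((u, v) \in [:: (1, 5); (1, 13); (3, 12); (4, 8); (9, 16)]).

Definition S3adj (a b : 'I_16) : bool := s3edge a.+1 b.+1 || s3edge b.+1 a.+1.

(* incoming vertices i_1=1, i_2=6, i_3=8 ; outgoing o_1=16, o_2=11, o_3=14;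
   k : 'I_3 stands for index k+1 *)
Definition S3in (k : 'I_3) : 'I_16 := inord (nth 0 [:: 1; 6; 8] k).-1.
Definition S3out (k : 'I_3) : 'I_16 := inord (nth 0 [:: 16; 11; 14] k).-1.

Definition S3terminal (a : 'I_16) : bool :=
  [exists k : 'I_3, (a == S3in k) || (a == S3out k)].

Definition hamiltonian_cycle (T : finType) (e : rel T) (c : seq T) : Prop :=
  [/\ uniq c, (forall x, x \in c), cycle e c & 3 <= size c].

Definition cycle_edge (T : eqType) (c : seq T) (x y : T) : bool :=
  [&& x \in c, y \in c & (next c x == y) || (next c y == x)].

Definition path_edge (A : eqType) (p : seq A) (a b : A) : bool :=
  ((a, b) \in zip p (behead p)) || ((b, a) \in zip p (behead p)).

From mathcomp Require Import all_boot.
Set Implicit Arguments. Unset Strict Implicit. Unset Printing Implicit Defensive.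

(* The edges of a Hamiltonian cycle that lie inside S_3 form a subgraph R of
   S_3 in which every vertex has degree at most 2, every vertex other than the
   six terminals has degree exactly 2 (both of its cycle neighbours lie in S_3),
   and which has no cycle, since the Hamiltonian cycle also visits a vertex
   outside S_3.  A search through the 2^20 edge subsets of S_3, pruned as soon
   as a vertex has all its edges decided and the wrong degree, shows that the
   only such subgraphs are the three Hamiltonian paths from i_k to o_k; a subset
   containing a cycle is rejected by exhibiting its nonempty 2-core. *)

Definition edge_rel (S : eqType) (E : seq (S * S)) : rel S :=
  fun a b => ((a, b) \in E) || ((b, a) \in E).

Definition forest (S : finType) (R : rel S) : Prop :=
  forall W : {set S}, {in W, forall a, 1 < #|[set b in W | R a b]|} -> W = set0.

Lemma card_count_enum (T : finType) (A : {pred T}) :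
  #|A| = count [in A] (enum T).
Proof.
rewrite -size_filter -(card_uniqP (filter_uniq _ (enum_uniq T))).
by apply: eq_card => x; rewrite mem_filter mem_enum andbT.
Qed.

Lemma path_edge_map (A B : eqType) (f : A -> B) (p : seq A) a b :
  injective f -> path_edge (map f p) (f a) (f b) = path_edge p a b.
Proof.
move=> f_inj.
have zip_map2 s t : zip (map f s) (map f t) = map (fun xy => (f xy.1, f xy.2)) (zip s t).
  by elim: s t => [|x s IHs] [|y t] //=; rewrite IHs.
have f2_inj : injective (fun xy : A * A => (f xy.1, f xy.2)).
  by move=> [x1 x2] [y1 y2] [/f_inj -> /f_inj ->].
rewrite /path_edge behead_map zip_map2.
by rewrite (mem_map f2_inj _ (a, b)) (mem_map f2_inj _ (b, a)).
Qed.

Section HamiltonianCycle.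
Variables (T : finType) (e : rel T) (c : seq T).
Hypotheses (e_sym : symmetric e) (c_ham : hamiltonian_cycle e c).

Let c_uniq : uniq c. Proof. by case: c_ham. Qed.
Let c_all x : x \in c. Proof. by case: c_ham. Qed.
Let c_cycle : cycle e c. Proof. by case: c_ham. Qed.

Lemma hamiltonian_next_closed (A : {pred T}) x :
  {homo next c : y / y \in A} -> x \in A -> forall y, y \in A.
Proof.
move=> nextA Ax y.
have /iter_findex <- : fconnect (next c) x y.
  by rewrite (fconnect_cycle (cycle_next c_uniq) (c_all x)) c_all.
by elim: findex => //= n; apply: nextA.
Qed.

Lemma hamiltonian_next_neq_prev x : next c x != prev c x.
Proof.
apply/eqP => nx_px.
have next_stable : {homo next c : y / y \in [:: x; next c x]}.
  move=> y /predU1P [-> | /predU1P [-> | //]]; first by rewrite !inE eqxx orbT.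
  by rewrite {1}nx_px (next_prev c_uniq) mem_head.
have : size c <= size [:: x; next c x].
  apply: uniq_leq_size c_uniq _ => y _.
  exact: hamiltonian_next_closed next_stable (mem_head _ _) y.
by case: c_ham => _ _ _ c3; rewrite leqNgt c3.
Qed.

Lemma cycle_edgeE x y : cycle_edge c x y = (y == next c x) || (y == prev c x).
Proof.
rewrite /cycle_edge !c_all /= eq_sym; congr orb.
by apply/eqP/eqP => [<- | ->]; rewrite ?prev_next ?next_prev.
Qed.

Variables (S : finType) (f : S -> T).
Hypothesis f_inj : injective f.

Definition cycle_trace : rel S := fun a b => cycle_edge c (f a) (f b).

Lemma cycle_traceE a b :
  cycle_trace a b = (f b == next c (f a)) || (f b == prev c (f a)).
Proof. exact: cycle_edgeE. Qed.

Lemma cycle_trace_sym : symmetric cycle_trace.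
Proof. by move=> a b; rewrite /cycle_trace /cycle_edge andbCA orbC. Qed.

Lemma cycle_trace_edge a b : cycle_trace a b -> e (f a) (f b).
Proof.
rewrite cycle_traceE => /orP [] /eqP ->; first exact: next_cycle.
by rewrite e_sym; apply: prev_cycle.
Qed.

Lemma cycle_trace_card_le2 a : #|cycle_trace a| <= 2.
Proof.
rewrite -(card_imset _ f_inj).
apply: leq_trans (card_size [:: next c (f a); prev c (f a)]).
apply/subset_leq_card/subsetP => _ /imsetP [b ab ->].
by move: ab; rewrite unfold_in (cycle_edgeE (f a)) !inE.
Qed.

Lemma cycle_trace_card2 a :
  (forall y, e (f a) y -> y \in codom f) -> #|cycle_trace a| = 2.
Proof.
move=> nbrs_f.
have /codomP [b1 fb1] : next c (f a) \in codom f by apply/nbrs_f/next_cycle.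
have /codomP [b2 fb2] : prev c (f a) \in codom f.
  by apply/nbrs_f; rewrite e_sym; apply: prev_cycle.
have b1_neq_b2 : b1 != b2.
  by apply: contraNneq (hamiltonian_next_neq_prev (f a)) => b12; rewrite fb1 fb2 b12.
have -> : 2 = (b1 != b2).+1 by rewrite b1_neq_b2.
rewrite -cards2; apply: eq_card => b.
by rewrite [LHS]unfold_in !inE (cycle_edgeE (f a)) fb1 fb2 !(inj_eq f_inj).
Qed.

Lemma cycle_trace_forest : (exists y, y \notin codom f) -> forest cycle_trace.
Proof.
move=> [y y_out] W W2; apply/eqP; apply: contraNT y_out => /set0Pn [a0 a0W].
have next_stable : {homo next c : x / x \in f @: W}.
  move=> _ /imsetP [a aW ->].
  have [b1 [b2 []]] := card_gt1P (W2 a aW).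
  rewrite !inE !cycle_traceE => /andP [b1W ab1] /andP [b2W ab2] b1_neq_b2.
  case/orP: ab1 => [/eqP <- | /eqP fb1]; first exact: imset_f.
  case/orP: ab2 => [/eqP <- | /eqP fb2]; first exact: imset_f.
  by move: b1_neq_b2; rewrite -(inj_eq f_inj) fb1 fb2 eqxx.
have /imsetP [a _ ->] := hamiltonian_next_closed next_stable (imset_f f a0W) y.
exact: codom_f.
Qed.

End HamiltonianCycle.

Section DegreeSearch.
Variables (S : eqType) (V : seq S) (E : seq (S * S)).

Definition degree (R : rel S) (a : S) : nat := count (R a) V.

Definition core (R : rel S) (W : seq S) : seq S :=
  [seq a <- W | 1 < count (fun b => (b \in W) && R a b) V].

Definition two_core (R : rel S) : seq S := iter (size V) (core R) V.

Definition mask_of (R : rel S) : bitseq := [seq R ab.1 ab.2 | ab <- E].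

Lemma edge_rel_mask_of (R : rel S) :
  symmetric R -> (forall a b, R a b -> edge_rel E a b) ->
  edge_rel (mask (mask_of R) E) =2 R.
Proof.
move=> R_sym R_E a b; rewrite /edge_rel /mask_of -filter_mask !mem_filter /=.
by rewrite (R_sym b) -andb_orr; apply/andb_idr/R_E.
Qed.

Variables (deg_ok : S -> nat -> bool) (P : rel S -> bool).

Definition degrees_ok (R : rel S) : bool := all (fun a => deg_ok a (degree R a)) V.

Definition settled (m : bitseq) (a : S) : bool :=
  all (fun ab => (ab.1 != a) && (ab.2 != a)) (drop (size m) E).

Definition dead_end (m : bitseq) : bool :=
  has (fun a => settled m a && ~~ deg_ok a (degree (edge_rel (mask m E)) a)) V.

(* [if] rather than [||]: the VM evaluates both arguments of [||] eagerly,
   which would defeat the pruning. *)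
Fixpoint degree_search (n : nat) (m : bitseq) : bool :=
  if dead_end m then true else
  if n is n'.+1 then degree_search n' (rcons m true) && degree_search n' (rcons m false)
  else degrees_ok (edge_rel (mask m E)) ==> P (edge_rel (mask m E)).

Lemma edge_rel_mask_settled m s a :
  size m <= size E -> settled m a ->
  edge_rel (mask (m ++ s) E) a =1 edge_rel (mask m E) a.
Proof.
move=> mE ma.
suff prefix s' : edge_rel (mask (m ++ s') E) a =1 edge_rel (mask m (take (size m) E)) a.
  by move=> b; rewrite prefix -[m in mask m E]cats0 prefix.
move=> b; rewrite -[E in mask _ E](cat_take_drop (size m)) mask_cat ?size_takel //.
rewrite /edge_rel !mem_cat.
have untouched b' : ((a, b') \in mask s' (drop (size m) E)) = false.
  by apply/negbTE/negP => /mem_mask /(allP ma) /=; rewrite eqxx.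
have untouched' b' : ((b', a) \in mask s' (drop (size m) E)) = false.
  by apply/negbTE/negP => /mem_mask /(allP ma) /=; rewrite eqxx andbF.
by rewrite untouched untouched' !orbF.
Qed.

Lemma dead_end_degrees m s :
  size m <= size E -> dead_end m -> ~~ degrees_ok (edge_rel (mask (m ++ s) E)).
Proof.
move=> mE /hasP [a aV /andP [ma a_bad]]; apply: contra a_bad => /allP /(_ a aV).
by rewrite /degree (eq_count (edge_rel_mask_settled s mE ma)).
Qed.

Lemma degree_searchP n m s :
  degree_search n m -> size m + n = size E -> size s = n ->
  degrees_ok (edge_rel (mask (m ++ s) E)) -> P (edge_rel (mask (m ++ s) E)).
Proof.
elim: n m s => [|n IHn] m s /=; case: ifP => [dead _ mE _ | _].
- by rewrite (negbTE (dead_end_degrees s _ dead)) // -mE leq_addr.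
- by move=> leaf _ /size0nil ->; rewrite cats0; apply/implyP.
- by rewrite (negbTE (dead_end_degrees s _ dead)) // -mE leq_addr.
case/andP=> search_t search_f mE; case: s => // b s [sn]; rewrite -cat_rcons.
have mE' : size (rcons m b) + n = size E by rewrite size_rcons addSnnS.
by case: b mE' => mE'; apply: IHn.
Qed.

Lemma degree_search_complete (R : rel S) :
  degree_search (size E) [::] ->
  symmetric R -> (forall a b, R a b -> edge_rel E a b) -> degrees_ok R ->
  P (edge_rel (mask (mask_of R) E)).
Proof.
move=> search R_sym R_E R_ok; have RE := edge_rel_mask_of R_sym R_E.
apply: (degree_searchP search) => //; first by rewrite size_map.
by apply/allP => a aV; rewrite /degree (eq_count (RE a)); apply: (allP R_ok).
Qed.

End DegreeSearch.

Lemma count_iota_card m (P : pred nat) : count P (iota 0 m) = #|[pred i : 'I_m | P i]|.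
Proof. by rewrite -val_enum_ord count_map card_count_enum. Qed.

Section OrdinalRelation.
Variable n : nat.

Definition ord_rel (R : rel 'I_n.+1) : rel nat :=
  fun x y => [&& x < n.+1, y < n.+1 & R (inord x) (inord y)].

Lemma ord_relE (R : rel 'I_n.+1) (a b : 'I_n.+1) : ord_rel R a b = R a b.
Proof. by rewrite /ord_rel !ltn_ord !inord_val. Qed.

Lemma ord_rel_sym (R : rel 'I_n.+1) : symmetric R -> symmetric (ord_rel R).
Proof. by move=> R_sym x y; rewrite /ord_rel R_sym andbCA. Qed.

Variables (R : rel 'I_n.+1) (Rn : rel nat).
Hypothesis RnR : Rn =2 ord_rel R.

Lemma degree_ord_rel (a : 'I_n.+1) : degree (iota 0 n.+1) Rn a = #|R a|.
Proof.
by rewrite /degree count_iota_card; apply: eq_card => b; rewrite !inE RnR ord_relE.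
Qed.

Lemma ord_rel_core_fixpoint (W : seq nat) :
  forest R -> core (iota 0 n.+1) Rn W = W -> W = [::].
Proof.
move=> R_forest W_fix.
have W2 x : x \in W -> 1 < count (fun y => (y \in W) && Rn x y) (iota 0 n.+1).
  by rewrite -{1}W_fix mem_filter => /andP [].
have /setP W0 : [set a : 'I_n.+1 | val a \in W] = set0.
  apply: R_forest => a; rewrite inE => /W2; rewrite count_iota_card.
  rewrite (@eq_card _ _ [pred b : 'I_n.+1 | (val b \in W) && Rn a b]) // => b.
  by rewrite !inE RnR ord_relE.
case: W W_fix W2 W0 => // x W _ W2 W0.
have /hasP [y _ /andP [_]] : has (fun y => (y \in x :: W) && Rn x y) (iota 0 n.+1).
  by rewrite has_count ltnW // W2 ?mem_head.
rewrite RnR => /and3P [x_lt _ _].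
by move/(_ (Ordinal x_lt)): W0; rewrite !inE eqxx.
Qed.

End OrdinalRelation.

Definition S3adjn (x y : nat) : bool := s3edge x.+1 y.+1 || s3edge y.+1 x.+1.

Definition S3edges : seq (nat * nat) :=
  [seq xy <- [seq (x, y) | x <- iota 0 16, y <- iota 0 16]
     | (xy.1 < xy.2) && S3adjn xy.1 xy.2].

Lemma S3adjn_edge_rel x y : x < 16 -> y < 16 -> S3adjn x y -> edge_rel S3edges x y.
Proof.
have /allP irr : all (fun x => ~~ S3adjn x x) (iota 0 16) by vm_compute.
move=> x16 y16 xy.
have [x_in y_in] : x \in iota 0 16 /\ y \in iota 0 16 by rewrite !mem_iota.
have yx : S3adjn y x by rewrite /S3adjn orbC.
rewrite /edge_rel !mem_filter !allpairs_f //= xy yx !andbT.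
by case: ltngtP => // eq_xy; move: xy; rewrite eq_xy (negbTE (irr y y_in)).
Qed.

Definition S3terminals : seq nat := [:: 0; 5; 7; 15; 10; 13].

Lemma S3terminal_val (a : 'I_16) : S3terminal a -> val a \in S3terminals.
Proof.
by case/existsP=> -[[|[|[|//]]] ?] /orP [] /eqP ->; rewrite /S3in /S3out /= inordK.
Qed.

Definition S3degree_ok (x d : nat) : bool :=
  if x \in S3terminals then d <= 2 else d == 2.

Definition spanning_path_of (Rn : rel nat) (p : seq nat) : bool :=
  [&& uniq p, size p == 16, all (fun x => x < 16) p
    & all (fun x => all (fun y => Rn x y == path_edge p x y) (iota 0 16)) (iota 0 16)].

Definition S3_io_path (Rn : rel nat) (kp : nat * seq nat) : bool :=
  [&& kp.1 < 3, head 0 kp.2 == (nth 0 [:: 1; 6; 8] kp.1).-1,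
      last 0 kp.2 == (nth 0 [:: 16; 11; 14] kp.1).-1 & spanning_path_of Rn kp.2].

Definition S3paths : seq (nat * seq nat) :=
  [seq (kp.1, [seq x.-1 | x <- kp.2]) | kp <- [::
    (0, [:: 1; 2; 3; 4; 5; 6; 7; 8; 9; 10; 11; 12; 13; 14; 15; 16]);
    (1, [:: 6; 7; 8; 4; 5; 1; 2; 3; 12; 13; 14; 15; 16; 9; 10; 11]);
    (2, [:: 8; 7; 6; 5; 4; 3; 2; 1; 13; 12; 11; 10; 9; 16; 15; 14])]].

Definition S3_trace_ok (Rn : rel nat) : bool :=
  let W := two_core (iota 0 16) Rn in
  (W != [::]) && (core (iota 0 16) Rn W == W) || has (S3_io_path Rn) S3paths.

Lemma S3_search :
  degree_search (iota 0 16) S3edges S3degree_ok S3_trace_ok (size S3edges) [::].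
Proof. by vm_compute. Qed.

Lemma S3_trace_okP (R : rel 'I_16) (Rn : rel nat) :
  Rn =2 ord_rel R -> forest R -> S3_trace_ok Rn ->
  exists k p, [/\ uniq p, size p = 16, head ord0 p = S3in k, last ord0 p = S3out k
    & R =2 path_edge p].
Proof.
move=> RnR R_forest /orP [/andP [core_ne /eqP core_fix] | /hasP [[k p] _]].
  by move: core_ne; rewrite (ord_rel_core_fixpoint RnR R_forest core_fix).
case/and4P=> /= k3 /eqP p_head /eqP p_last /and4P [p_uniq /eqP p_size p16 /allP Rn_p].
set q := map (@inord 15) p.
have qp : map val q = p.
  by rewrite -map_comp; apply: map_id_in => x /(allP p16) /inordK.
have ord0E : ord0 = inord 0 :> 'I_16 by apply/val_inj; rewrite /= inordK.
have q_head : head (inord 0) q = inord (head 0 p) by rewrite /q; case: (p).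
exists (Ordinal k3), q; split.
- by rewrite -(map_inj_uniq val_inj) qp.
- by rewrite size_map.
- by rewrite ord0E q_head p_head.
- by rewrite ord0E last_map p_last.
have iota16 (x : 'I_16) : val x \in iota 0 16 by rewrite mem_iota ltn_ord.
move=> a b; rewrite -(path_edge_map _ _ _ val_inj) qp -ord_relE -RnR.
exact/eqP/(allP (Rn_p a (iota16 a)) b (iota16 b)).
Qed.

Lemma S3_forest_io_path (R : rel 'I_16) :
  symmetric R -> subrel R S3adj ->
  (forall a, #|R a| <= 2) -> (forall a, ~~ S3terminal a -> #|R a| = 2) -> forest R ->
  exists k p, [/\ uniq p, size p = 16, head ord0 p = S3in k, last ord0 p = S3out k
    & R =2 path_edge p].
Proof.
move=> R_sym R_adj R_le2 R_eq2 R_forest; set Rn := ord_rel R.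
have Rn_sym : symmetric Rn := ord_rel_sym R_sym.
have Rn_edges x y : Rn x y -> edge_rel S3edges x y.
  case/and3P=> x16 y16 /R_adj; rewrite /S3adj !inordK //.
  exact: S3adjn_edge_rel.
have Rn_deg : degrees_ok (iota 0 16) S3degree_ok Rn.
  apply/allP => x; rewrite mem_iota => /andP [_ x16].
  rewrite -[x]/(val (Ordinal x16)) (@degree_ord_rel _ R Rn (fun _ _ => erefl)).
  rewrite /S3degree_ok.
  case: ifPn => [_ | inner]; first exact: R_le2.
  by rewrite R_eq2 //; apply: contra inner; apply: S3terminal_val.
apply: S3_trace_okP R_forest (degree_search_complete S3_search Rn_sym Rn_edges Rn_deg).
exact: edge_rel_mask_of.
Qed.

Theorem mainTheorem1 (T : finType) (e : rel T) (f : 'I_16 -> T) :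
  symmetric e -> irreflexive e ->
  injective f ->
  (forall a b : 'I_16, e (f a) (f b) = S3adj a b) ->
  (exists y : T, y \notin codom f) ->
  (forall (a : 'I_16) (y : T), y \notin codom f -> e (f a) y -> S3terminal a) ->
  forall c : seq T, hamiltonian_cycle e c ->
  exists k : 'I_3, exists p : seq 'I_16,
    [/\ uniq p, size p = 16, head ord0 p = S3in k, last ord0 p = S3out k
      & forall a b : 'I_16, cycle_edge c (f a) (f b) = path_edge p a b].
Proof.
move=> e_sym _ f_inj f_adj outside outside_terminal c c_ham.
apply: (S3_forest_io_path (R := cycle_trace c f)).
- exact: cycle_trace_sym.
- by move=> a b /(cycle_trace_edge e_sym c_ham); rewrite f_adj.
- by move=> a; apply: (cycle_trace_card_le2 c_ham f_inj).
- move=> a inner; apply: (cycle_trace_card2 e_sym c_ham f_inj) => y fa_y.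
  by apply: contraNT inner => y_out; apply: outside_terminal y_out fa_y.
- exact: (cycle_trace_forest c_ham f_inj).
Qed.
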